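(* For every $n\in\mathbb{N}$, the pair $(\mathcal{A}_n,\mathcal{R}_{\mathrm{lps}_n})$ is a finite and complete presentation for the monoid $\mathrm{lps}_n$, and the pair $(\mathcal{A}_n,\mathcal{R}_{\mathrm{rps}_n})$ is a complete presentation for the monoid $\mathrm{rps}_n$.
   Context: Let $\mathcal{A}=\{1<2<3<\cdots\}$ be the positive integers viewed as a totally ordered alphabet and $\mathcal{A}_n=\{1<2<\cdots<n\}$. An lPS tableau is a finite (possibly empty) sequence of nonempty bottom-justified columns of boxes filled with elements of $\mathcal{A}$, such that the entries of each column are strictly decreasing from top to bottom and the bottom entries of the columns form a weakly increasing sequence from left to right. An rPS tableau is defined in the same way but with columns weakly decreasing from top to bottom and the bottom row strictly increasing from left to right. Right insertion of a symbol $a$ into an lPS tableau $B$: if $a$ is greater than or equal to every entry of the bottom row, append a new column consisting of $a$ at the right end; otherwise, let $z$ be the leftmost bottom-row entry with $z>a$ and put $a$ in a new box at the bottom of the column of $z$ (the previous entries of that column move up one box). Right insertion into an rPS tableau is the same except that a new column is created iff $a$ is strictly greater than every bottom-row entry, and otherwise $z$ is the leftmost bottom-row entry with $z\geq a$. For a word $w=w_1\cdots w_k$, $\mathfrak{R}_\ell(w)$ (resp. $\mathfrak{R}_r(w)$) is the tableau obtained by starting with the empty lPS (resp. rPS) tableau and right-inserting $w_1,\dots,w_k$ in this order. The monoid $\mathrm{lps}_n$ (resp. $\mathrm{rps}_n$) is the quotient of the free monoid $\mathcal{A}_n^*$ by the congruence $u\equiv v\iff \mathfrak{R}_\ell(u)=\mathfrak{R}_\ell(v)$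 (resp. $\mathfrak{R}_r(u)=\mathfrak{R}_r(v)$). $\mathcal{R}_{\mathrm{lps}_n}=\{(yux,yxu): m\geq 1,\ x,y,u_1,\dots,u_m\in\mathcal{A}_n,\ u=u_m\cdots u_1,\ x<y\leq u_1<\cdots<u_m\}$ and $\mathcal{R}_{\mathrm{rps}_n}=\{(yux,yxu): m\geq 1,\ x,y,u_1,\dots,u_m\in\mathcal{A}_n,\ u=u_m\cdots u_1,\ x\leq y< u_1\leq\cdots\leq u_m\}$. A presentation $(\Sigma,\mathcal{R})$ defines $M$ if $M\cong\Sigma^*/\mathcal{R}^\#$, where $\mathcal{R}^\#$ is the congruence generated by $\mathcal{R}$. Viewing $\mathcal{R}$ as a rewriting system with rules $r^+\to r^-$ for $(r^+,r^-)\in\mathcal{R}$ (applied to factors), the presentation is complete if the rewriting system is noetherian (no infinite chain of rewrites) and confluent. *)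

From mathcomp Require Import all_boot.
From Stdlib Require Import Relations.Relation_Operators.
Set Implicit Arguments. Unset Strict Implicit. Unset Printing Implicit Defensive.

Definition word := seq nat.

Definition inA (n : nat) (w : word) : bool := all (fun a => 0 < a <= n) w.

(* A PS tableau is a sequence of columns (left to right); each column is
   listed from bottom to top, so its head is its bottom-row entry. *)
Definition tableau := seq (seq nat).

Definition is_lPS (B : tableau) : Prop :=
  all (fun c => c != [::]) B /\
  all (fun c => sorted ltn c) B /\       (* strictly decreasing top-to-bottom *)
  sorted leq (map (head 0) B).

Definition is_rPS (B : tableau) : Prop :=
  all (fun c => c != [::]) B /\
  all (fun c => sorted leq c) B /\       (* weakly decreasing top-to-bottom *)
  sorted ltn (map (head 0) B).

Fixpoint rins_l (a : nat) (B : tableau) : tableau :=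
  match B with
  | [::] => [:: [:: a]]
  | c :: B' => if a < head 0 c then (a :: c) :: B' else c :: rins_l a B'
  end.

Fixpoint rins_r (a : nat) (B : tableau) : tableau :=
  match B with
  | [::] => [:: [:: a]]
  | c :: B' => if a <= head 0 c then (a :: c) :: B' else c :: rins_r a B'
  end.

Definition Rl (w : word) : tableau := foldl (fun B a => rins_l a B) [::] w.
Definition Rr (w : word) : tableau := foldl (fun B a => rins_r a B) [::] w.

Definition lps_cong (n : nat) (u v : word) : Prop := inA n u /\ inA n v /\ Rl u = Rl v.
Definition rps_cong (n : nat) (u v : word) : Prop := inA n u /\ inA n v /\ Rr u = Rr v.

(* R_lps_n : pairs (y u x, y x u), u = u_m ... u_1, x < y <= u_1 < ... < u_m,
   all letters in A_n, m >= 1.  The list s = [:: u_1; ...; u_m]. *)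
Definition R_lps (n : nat) (l r : word) : Prop :=
  exists (x y : nat) (s : seq nat),
    [/\ 0 < size s, inA n (x :: y :: s), x < y, y <= head 0 s & sorted ltn s] /\
    l = y :: rev s ++ [:: x] /\ r = y :: x :: rev s.

Definition R_rps (n : nat) (l r : word) : Prop :=
  exists (x y : nat) (s : seq nat),
    [/\ 0 < size s, inA n (x :: y :: s), x <= y, y < head 0 s & sorted leq s] /\
    l = y :: rev s ++ [:: x] /\ r = y :: x :: rev s.

Definition rstep (R : word -> word -> Prop) (u v : word) : Prop :=
  exists p q l r, R l r /\ u = p ++ l ++ q /\ v = p ++ r ++ q.

Definition gen_cong (R : word -> word -> Prop) : word -> word -> Prop :=
  clos_refl_sym_trans word (rstep R).

Definition rstar (R : word -> word -> Prop) : word -> word -> Prop :=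
  clos_refl_trans word (rstep R).

(* (A_n, R) defines the monoid A_n^* / cong, with the identity on generators:
   the congruences R^# and cong coincide on A_n^*. *)
Definition defines (n : nat) (R : word -> word -> Prop)
    (cong : word -> word -> Prop) : Prop :=
  forall u v, inA n u -> inA n v -> (gen_cong R u v <-> cong u v).

Definition finite_rel (R : word -> word -> Prop) : Prop :=
  exists L : seq (word * word), forall l r, R l r <-> (l, r) \in L.

Definition noetherian (n : nat) (R : word -> word -> Prop) : Prop :=
  ~ exists f : nat -> word, inA n (f 0) /\ forall i, rstep R (f i) (f i.+1).

Definition confluent (n : nat) (R : word -> word -> Prop) : Prop :=
  forall w u v, inA n w -> rstar R w u -> rstar R w v ->
    exists z, rstar R u z /\ rstar R v z.

Definition complete (n : nat) (R : word -> word -> Prop) : Prop :=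
  noetherian n R /\ confluent n R.

From mathcomp Require Import all_boot zify.
From Stdlib Require Import Relations.Relation_Operators Relations.Operators_Properties.
Set Implicit Arguments. Unset Strict Implicit. Unset Printing Implicit Defensive.

(* Both monoids are treated at once: they differ only in whether the
   comparison used for insertion (and for columns) is strict, a < z for lPS,
   or not, a <= z for rPS.  A rule y u x -> y x u does not change the
   insertion tableau: y lands in some column whose bottom entry then blocks
   every u_i, so the u_i all go strictly to the right of that column while x
   goes into it or to its left, and the two insertion orders commute.
   Conversely, appending a letter to the reading word of a tableau (columns
   read top to bottom, from left to right) and pushing it left column by
   column with the rules yields the reading word of the new tableau; so every
   word rewrites to the reading word of its tableau, which gives both the
   presentation and confluence.  Termination: a rule moves x left over the
   letters u_i > x, so it strictly decreases the number of inversions. *)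

Definition col_rel (strict : bool) (a z : nat) : bool :=
  if strict then a < z else a <= z.

Definition row_rel (strict : bool) (a z : nat) : bool :=
  if strict then a <= z else a < z.

Section Comparisons.
Variable strict : bool.

Lemma row_relNcol a z : row_rel strict a z = ~~ col_rel strict z a.
Proof. by case: strict => /=; lia. Qed.

Lemma col_rel_trans : transitive (col_rel strict).
Proof. by case: strict => y x z /=; lia. Qed.

Lemma row_rel_trans : transitive (row_rel strict).
Proof. by case: strict => y x z /=; lia. Qed.

Lemma col_row_trans a b c : col_rel strict a b -> row_rel strict b c -> col_rel strict a c.
Proof. by case: strict => /=; lia. Qed.

Lemma row_col_trans a b c : row_rel strict a b -> col_rel strict b c -> row_rel strict a c.
Proof. by case: strict => /=; lia. Qed.

Lemma col_row_ltn a b c : col_rel strict a b -> row_rel strict b c -> a < c.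
Proof. by case: strict => /=; lia. Qed.

Lemma ltn_row_rel a c : a < c -> row_rel strict a c.
Proof. by case: strict => /=; lia. Qed.

End Comparisons.

Fixpoint rins (strict : bool) (a : nat) (B : tableau) : tableau :=
  match B with
  | [::] => [:: [:: a]]
  | c :: B' => if col_rel strict a (head 0 c) then (a :: c) :: B'
               else c :: rins strict a B'
  end.

Definition tab (strict : bool) (w : word) : tableau :=
  foldl (fun B a => rins strict a B) [::] w.

Lemma Rl_tab w : Rl w = tab true w.
Proof.
have rins_lE a B : rins_l a B = rins true a B by elim: B => //= c B ->.
by rewrite /Rl /tab; elim: w [::] => //= a w IH B; rewrite rins_lE IH.
Qed.

Lemma Rr_tab w : Rr w = tab false w.
Proof.
have rins_rE a B : rins_r a B = rins false a B by elim: B => //= c B ->.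
by rewrite /Rr /tab; elim: w [::] => //= a w IH B; rewrite rins_rE IH.
Qed.

Definition ps_rule (strict : bool) (n : nat) (l r : word) : Prop :=
  exists (x y : nat) (s : seq nat),
    [/\ 0 < size s, inA n (x :: y :: s), col_rel strict x y,
        row_rel strict y (head 0 s) & sorted (col_rel strict) s] /\
    l = y :: rev s ++ [:: x] /\ r = y :: x :: rev s.

Lemma R_lpsE n : R_lps n = ps_rule true n. Proof. by []. Qed.
Lemma R_rpsE n : R_rps n = ps_rule false n. Proof. by []. Qed.

Section Rewriting.
Variable R : word -> word -> Prop.

Lemma rstar_ctx p q u v : rstar R u v -> rstar R (p ++ u ++ q) (p ++ v ++ q).
Proof.
elim=> [x y [p' [q' [l [r [Hlr [-> ->]]]]]]|x|x y z _ IH1 _ IH2].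
- by apply: rt_step; exists (p ++ p'), (q' ++ q), l, r; rewrite -!catA.
- exact: rt_refl.
- exact: rt_trans IH1 IH2.
Qed.

Lemma gen_cong_invariant (T : Type) (f : word -> T) :
  (forall u v, rstep R u v -> f u = f v) -> forall u v, gen_cong R u v -> f u = f v.
Proof. by move=> Hf u v; elim=> [|//|? ? _ ->|? ? ? _ -> _ ->]. Qed.

Variable n : nat.

Lemma noetherian_measure (m : word -> nat) :
  (forall u v, rstep R u v -> m v < m u) -> noetherian n R.
Proof.
move=> Hm [f [_ Hf]].
have bound i : m (f i) + i <= m (f 0).
  by elim: i => [|i IH]; rewrite ?addn0 // addnS (leq_trans _ IH) // ltn_add2r Hm.
by have := bound (m (f 0)).+1; lia.
Qed.

Hypothesis rstep_inA : forall u v, rstep R u v -> inA n u -> inA n v.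

Lemma rstar_inA u v : rstar R u v -> inA n u -> inA n v.
Proof. by elim=> [//|//|? ? ? _ H1 _ H2 /H1 /H2]. Qed.

Section NormalForm.
Variables (T : Type) (f : word -> T) (nf : T -> word).
Hypothesis rstep_invariant : forall u v, rstep R u v -> f u = f v.
Hypothesis rstar_nf : forall w, inA n w -> rstar R w (nf (f w)).

Lemma gen_cong_normal_form u v :
  inA n u -> inA n v -> gen_cong R u v <-> f u = f v.
Proof.
move=> Hu Hv; split; first exact: gen_cong_invariant.
move=> Euv; apply: (@rst_trans _ _ _ (nf (f u))); first exact/clos_rt_clos_rst/rstar_nf.
by rewrite Euv; apply/rst_sym/clos_rt_clos_rst/rstar_nf.
Qed.

Lemma confluent_normal_form : confluent n R.
Proof.
have rstar_invariant u v : rstar R u v -> f u = f v.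
  by move=> Huv; apply: (gen_cong_invariant rstep_invariant); apply: clos_rt_clos_rst.
move=> w u v Hw Hu Hv; exists (nf (f w)); split.
- by rewrite (rstar_invariant _ _ Hu); apply/rstar_nf/(rstar_inA Hu).
- by rewrite (rstar_invariant _ _ Hv); apply/rstar_nf/(rstar_inA Hv).
Qed.

End NormalForm.
End Rewriting.

Fixpoint inversions (w : word) : nat :=
  if w is a :: w' then count (fun b => b < a) w' + inversions w' else 0.

Definition cross_inversions (u v : word) : nat :=
  sumn [seq count (fun b => b < a) v | a <- u].

Lemma inversions_cat u v :
  inversions (u ++ v) = inversions u + inversions v + cross_inversions u v.
Proof.
elim: u => [|a u IH] /=; first by rewrite /cross_inversions /= addn0.
by rewrite IH /cross_inversions /= count_cat -/(cross_inversions u v); lia.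
Qed.

Lemma cross_inversions_perml u u' v :
  perm_eq u u' -> cross_inversions u v = cross_inversions u' v.
Proof. by move=> H; apply/perm_sumn/perm_map. Qed.

Lemma cross_inversions_permr u v v' :
  perm_eq v v' -> cross_inversions u v = cross_inversions u v'.
Proof. by move=> /permP H; rewrite /cross_inversions; congr sumn; apply: eq_map. Qed.

Lemma cross_inversions1 u x :
  (forall a, a \in u -> x < a) -> cross_inversions u [:: x] = size u.
Proof.
elim: u => //= a u IH Hu; rewrite /cross_inversions /= -/(cross_inversions u [:: x]).
by rewrite IH => [|b bu]; rewrite ?Hu ?mem_head // in_cons bu orbT.
Qed.

Lemma inversions_factor_lt p q l r : perm_eq l r -> inversions r < inversions l ->
  inversions (p ++ r ++ q) < inversions (p ++ l ++ q).
Proof.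
move=> plr lt_rl; rewrite !inversions_cat (cross_inversions_perml _ plr).
by rewrite (@cross_inversions_permr p (l ++ q) (r ++ q)) ?perm_cat2r //; lia.
Qed.

Section PSRules.
Variables (strict : bool) (n : nat).

Local Notation col := (col_rel strict).
Local Notation row := (row_rel strict).
Local Notation rule := (ps_rule strict n).
Local Notation rins_word := (foldl (fun B a => rins strict a B)).

Lemma rins_split y B : exists P c Q,
  [/\ rins strict y B = P ++ c :: Q, head 0 c = y & all (fun c => ~~ col y (head 0 c)) P].
Proof.
elim: B => [|c0 B [P [c [Q [E1 E2 E3]]]]] /=; first by exists [::], [:: y], [::].
case: ifP => H; first by exists [::], (y :: c0), B.
by exists (c0 :: P), c, Q; rewrite E1 /= H.
Qed.

Lemma rins_cat_fit x c P Q : col x (head 0 c) ->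
  rins strict x (P ++ c :: Q) = rins strict x (P ++ [:: c]) ++ Q.
Proof.
move=> H; elim: P => [|c0 P IH] /=; first by rewrite H.
by case: ifP => _ //=; rewrite ?IH // -catA.
Qed.

Lemma rins_word_cat_skip K Q w : (forall u, u \in w -> all (fun c => ~~ col u (head 0 c)) K) ->
  rins_word (K ++ Q) w = K ++ rins_word Q w.
Proof.
have rins_skip a Q' : all (fun c => ~~ col a (head 0 c)) K ->
    rins strict a (K ++ Q') = K ++ rins strict a Q'.
  by elim: K => //= c K IH /andP [/negbTE -> /IH ->].
elim: w Q => //= u w IH Q Hw.
by rewrite rins_skip ?Hw ?mem_head // IH // => v vw; apply: Hw; rewrite in_cons vw orbT.
Qed.

Lemma all_heads_rins (p : pred nat) x L : all (fun c => p (head 0 c)) L -> p x ->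
  all (fun c => p (head 0 c)) (rins strict x L).
Proof.
move=> + px; elim: L => [|c L IH] /=; first by rewrite px.
by case/andP => pc pL; case: ifP => _ /=; rewrite ?px ?pc ?pL ?IH.
Qed.

Lemma mem_ps_rule_row x y s u : col x y -> row y (head 0 s) -> sorted col s ->
  u \in s -> row y u /\ x < u.
Proof.
case: s => //= h t Hxy Hyh Hs; rewrite in_cons => /orP [/eqP -> | ut].
  by split=> //; apply: col_row_ltn Hxy Hyh.
have Hyu : row y u.
  by apply: (row_col_trans Hyh); move/allP: (order_path_min (@col_rel_trans _) Hs); apply.
by split=> //; apply: col_row_ltn Hxy Hyu.
Qed.

Lemma rins_word_rule l r : rule l r -> forall B, rins_word B l = rins_word B r.
Proof.
move=> [x [y [s [[_ _ Hxy Hys Hs] [-> ->]]]]] B.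
have Hu u : u \in rev s -> row y u by rewrite mem_rev => /(mem_ps_rule_row Hxy Hys Hs) [].
have [P [c [Q [E1 E2 E3]]]] := rins_split y B.
have skip u : u \in rev s -> all (fun c => ~~ col u (head 0 c)) (P ++ [:: c]).
  move=> /Hu Hyu; rewrite all_cat /= E2 -(row_relNcol strict y u) Hyu !andbT.
  apply/allP => c' /(allP E3) Hc.
  by rewrite -row_relNcol (row_rel_trans _ Hyu) // row_relNcol.
rewrite /= foldl_cat /= E1 -cat_rcons rins_word_cat_skip;
  last by move=> u /skip; rewrite cats1.
have fit : col x (head 0 c) by rewrite E2.
rewrite !cat_rcons (rins_cat_fit _ (rins_word Q _) fit) (rins_cat_fit _ Q fit).
rewrite rins_word_cat_skip // => u /[dup] /skip Hskip /Hu Hyu.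
apply: (@all_heads_rins (fun h => ~~ col u h)) Hskip _.
by rewrite -row_relNcol ltn_row_rel // (col_row_ltn Hxy Hyu).
Qed.

Lemma rstep_tab u v : rstep rule u v -> tab strict u = tab strict v.
Proof.
by move=> [p [q [l [r [H [-> ->]]]]]]; rewrite /tab !foldl_cat (rins_word_rule H).
Qed.

Lemma rstep_rule_inA u v : rstep rule u v -> inA n u -> inA n v.
Proof.
move=> [p [q [l [r [[x [y [s [[_ Hs _ _ _] [-> ->]]]]] [-> ->]]]]]].
rewrite /inA !all_cat /= all_rev => /and3P [-> _ ->].
by move: Hs; rewrite /inA /= => /and3P [-> -> ->].
Qed.

Definition ps_tableau (B : tableau) : bool :=
  [&& all (fun c => c != [::]) B, all (sorted col) B,
      sorted row (map (head 0) B) & all (inA n) B].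

Definition reading (B : tableau) : word := flatten (map rev B).

Lemma all_nonempty_rins a B :
  all (fun c => c != [::]) B -> all (fun c => c != [::]) (rins strict a B).
Proof.
by elim: B => //= c B IH /andP [Hc HB]; case: ifP => _ /=; rewrite ?Hc ?HB ?IH.
Qed.

Lemma all_sorted_rins a B : all (sorted col) B -> all (sorted col) (rins strict a B).
Proof.
elim: B => //= c B IH /andP [Hc HB]; case: ifP => Hac /=; last by rewrite Hc IH.
by rewrite HB andbT; case: c Hc Hac => //= h t -> ->.
Qed.

Lemma all_inA_rins a B : 0 < a <= n -> all (inA n) B -> all (inA n) (rins strict a B).
Proof.
move=> Ha; elim: B => /= [_|c B IH /andP [Hc HB]]; first by rewrite /inA /= Ha.
by case: ifP => _ /=; rewrite ?HB ?IH ?Hc // /inA /= Ha.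
Qed.

Lemma path_heads_cons_col a c B : col a (head 0 c) ->
  path row (head 0 c) (map (head 0) B) -> path row a (map (head 0) B).
Proof.
by case: B => //= c' B Hac /andP [H ->]; rewrite (ltn_row_rel _ (col_row_ltn Hac H)).
Qed.

Lemma path_heads_rins a p B : ~~ col a p ->
  path row p (map (head 0) B) -> path row p (map (head 0) (rins strict a B)).
Proof.
elim: B p => [|c B IH] p Hap /=; first by rewrite row_relNcol Hap.
case/andP => Hpc Hpath; case: ifP => Hac /=.
  by rewrite row_relNcol Hap (path_heads_cons_col Hac).
by rewrite Hpc IH ?Hac.
Qed.

Lemma sorted_heads_rins a B :
  sorted row (map (head 0) B) -> sorted row (map (head 0) (rins strict a B)).
Proof.
case: B => //= c B; case: ifP => Hac /=; first exact: path_heads_cons_col.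
by apply: path_heads_rins; rewrite Hac.
Qed.

Lemma rins_ps_tableau a B : 0 < a <= n -> ps_tableau B -> ps_tableau (rins strict a B).
Proof.
move=> Ha /and4P [ne ss so ia]; apply/and4P; split.
- exact: all_nonempty_rins.
- exact: all_sorted_rins.
- exact: sorted_heads_rins.
- exact: all_inA_rins.
Qed.

Lemma ps_tableau_behead c B : ps_tableau (c :: B) -> ps_tableau B.
Proof.
by case/and4P => /andP [_ ?] /andP [_ ?] /path_sorted ? /andP [_ ?]; apply/and4P.
Qed.

Lemma ps_tableau_rins_word B w : inA n w -> ps_tableau B -> ps_tableau (rins_word B w).
Proof.
elim: w B => //= a w IH B /andP [Ha Hw] HB; exact: IH (rins_ps_tableau Ha HB).
Qed.

Lemma rstar_rule_cons y x s q : rule (y :: rev s ++ [:: x]) (y :: x :: rev s) ->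
  rstar rule (y :: rev s ++ x :: q) (y :: x :: rev s ++ q).
Proof.
move=> H; apply: rt_step; exists [::], q, (y :: rev s ++ [:: x]), (y :: x :: rev s).
by rewrite /= -!catA.
Qed.

(* The letter a, which fits under h, travels left through Cs, crossing one
   whole column per rule application. *)
Lemma rstar_shift_reading a h Cs : 0 < a <= n -> 0 < h <= n -> col a h ->
  ps_tableau Cs -> path row h (map (head 0) Cs) ->
  rstar rule (h :: reading Cs ++ [:: a]) (h :: a :: reading Cs).
Proof.
move=> Ha; elim: Cs h => [|c Cs IH] h Hh Hah; first by move=> *; apply: rt_refl.
move=> /[dup] /ps_tableau_behead HCs; case: c => [|h' t] //.
case/and4P=> _ /andP [Ht _] _ /andP [Hc _] /= /andP [Hhh' Hpath].
have Hh' : 0 < h' <= n by case/andP: Hc.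
rewrite /reading /= -/(reading Cs) rev_cons -cats1 -!catA /=.
have := IH h' Hh' (col_row_trans Hah Hhh') HCs Hpath.
move=> /(rstar_ctx (h :: rev t) [::]); rewrite !cats0 /= => H1.
apply: rt_trans H1 _.
have := @rstar_rule_cons h a (h' :: t) (reading Cs).
rewrite rev_cons -cats1 -!catA /=; apply.
exists a, h, (h' :: t); split; first by split=> //; rewrite /inA /= Ha Hh.
by rewrite rev_cons -cats1 -catA.
Qed.

Lemma rstar_reading_rins a B : 0 < a <= n -> ps_tableau B ->
  rstar rule (reading B ++ [:: a]) (reading (rins strict a B)).
Proof.
move=> Ha; elim: B => [|c B IH] /=; first by move=> _; apply: rt_refl.
move=> /[dup] /ps_tableau_behead HB; case: c => [|h t] //.
case/and4P=> _ _ /= Hpath /andP [Hc _].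
have Hh : 0 < h <= n by case/andP: Hc.
case: ifP => Hah.
  have := rstar_shift_reading Ha Hh Hah HB Hpath.
  move=> /(rstar_ctx (rev t) [::]); rewrite !cats0 /reading /= !rev_cons -!cats1 -!catA.
  by apply.
move: (IH HB) => /(rstar_ctx (rev (h :: t)) [::]); rewrite !cats0 /reading /= -catA.
by apply.
Qed.

Lemma rstar_reading_tab w : inA n w -> rstar rule w (reading (tab strict w)).
Proof.
elim/last_ind: w => [|w a IH]; first by move=> _; apply: rt_refl.
rewrite /inA all_rcons => /andP [Ha Hw].
rewrite /tab foldl_rcons -/(tab strict w).
apply: rt_trans (rstar_reading_rins Ha (ps_tableau_rins_word Hw (isT : ps_tableau [::]))).
by move: (IH Hw) => /(rstar_ctx [::] [:: a]); rewrite /= cats1.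
Qed.

Lemma inversions_rule l r : rule l r -> inversions r < inversions l.
Proof.
move=> [x [y [s [[s0 _ Hxy Hys Hs] [-> ->]]]]].
have Hx u : u \in rev s -> x < u by rewrite mem_rev => /(mem_ps_rule_row Hxy Hys Hs) [].
have no_lt_x : count (fun b => b < x) (rev s) = 0.
  by rewrite (eq_in_count (a2 := pred0)) ?count_pred0 // => u /Hx /=; lia.
rewrite /= inversions_cat !count_cat /= (cross_inversions1 Hx) size_rev no_lt_x.
by case: (x < y) => /=; lia.
Qed.

Lemma ps_rule_complete : complete n rule.
Proof.
split.
- apply: (noetherian_measure (m := inversions)) => _ _ [p [q [l [r [Hlr [-> ->]]]]]].
  apply: inversions_factor_lt (inversions_rule Hlr).
  by case: Hlr => [x [y [s [_ [-> ->]]]]]; rewrite perm_cons cats1 perm_rcons.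
- exact: (confluent_normal_form rstep_rule_inA rstep_tab rstar_reading_tab).
Qed.

Lemma ps_rule_gen_cong u v : inA n u -> inA n v ->
  gen_cong rule u v <-> tab strict u = tab strict v.
Proof. exact: (gen_cong_normal_form rstep_tab rstar_reading_tab). Qed.

End PSRules.

Fixpoint words_upto (n k : nat) : seq word :=
  if k is k'.+1 then [::] :: [seq a :: w | a <- iota 1 n, w <- words_upto n k']
  else [:: [::]].

Lemma mem_words_upto n k w : inA n w -> size w <= k -> w \in words_upto n k.
Proof.
elim: w k => [|a w IH] [|k] //= /andP [Ha Hw] Hs; rewrite in_cons /=.
apply/allpairsP; exists (a, w); split=> //=; first by rewrite mem_iota; lia.
exact: IH.
Qed.

Lemma size_sorted_ltn_inA n s : inA n s -> sorted ltn s -> size s <= n.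
Proof.
move=> /allP Hs /(sorted_uniq ltn_trans ltnn) Us.
rewrite -(size_iota 1 n); apply: uniq_leq_size Us _ => a /Hs.
by rewrite mem_iota; lia.
Qed.

Definition lps_triple (n : nat) (t : nat * nat * seq nat) : bool :=
  let: (x, y, s) := t in
  [&& 0 < size s, inA n [:: x, y & s], x < y, y <= head 0 s & sorted ltn s].

Definition rule_pair (t : nat * nat * seq nat) : word * word :=
  let: (x, y, s) := t in (y :: rev s ++ [:: x], [:: y, x & rev s]).

Definition lps_rules (n : nat) : seq (word * word) :=
  [seq rule_pair t | t <- [seq (xy.1, xy.2, s) | xy <- [seq (x, y) | x <- iota 1 n, y <- iota 1 n],
                                                 s <- words_upto n n] & lps_triple n t].

Lemma R_lps_finite n : finite_rel (R_lps n).
Proof.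
exists (lps_rules n) => l r; split.
  move=> [x [y [s [[s0 Hi Hxy Hys Hs] [-> ->]]]]].
  apply/mapP; exists (x, y, s) => //; rewrite mem_filter.
  apply/andP; split; first exact/and5P.
  move: Hi; rewrite /inA /= => /and3P [Hx Hy Hn].
  apply/allpairsP; exists ((x, y), s); split=> //.
    by apply/allpairsP; exists (x, y); rewrite !mem_iota; split=> //; lia.
  exact/mem_words_upto/size_sorted_ltn_inA.
case/mapP => [[[x y] s]]; rewrite mem_filter => /andP [/and5P ? _] [-> ->].
by exists x, y, s.
Qed.

Theorem theorem5p5 (n : nat) :
  (defines n (R_lps n) (lps_cong n) /\ finite_rel (R_lps n) /\ complete n (R_lps n)) /\
  (defines n (R_rps n) (rps_cong n) /\ complete n (R_rps n)).
Proof.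
have defines_ps strict u v : inA n u -> inA n v ->
    gen_cong (ps_rule strict n) u v <-> inA n u /\ inA n v /\ tab strict u = tab strict v.
  by move=> Hu Hv; rewrite ps_rule_gen_cong //; tauto.
split; [split; [|split] | split].
- by move=> u v; rewrite R_lpsE /lps_cong !Rl_tab; apply: defines_ps.
- exact: R_lps_finite.
- by rewrite R_lpsE; apply: ps_rule_complete.
- by move=> u v; rewrite R_rpsE /rps_cong !Rr_tab; apply: defines_ps.
- by rewrite R_rpsE; apply: ps_rule_complete.
Qed.
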